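(* Let $q$ be a prime power, let $\mathcal{H}_q$ be the Hermitian curve over $\mathbb{F}_{q^2}$, of genus $g(\mathcal{H}_q)=\frac{q(q-1)}{2}$, and let $X,T$ be fixed positive integers (security and privacy parameters). Let $L$ be an integer with $g(\mathcal{H}_q)\le L\le q^3-g(\mathcal{H}_q)$ and $L+g(\mathcal{H}_q)\equiv 0\pmod q$, and set $m=\frac{L+g(\mathcal{H}_q)}{q}$. Let $\alpha_1,\dots,\alpha_m\in\mathbb{F}_{q^2}\setminus\{0\}$ be pairwise distinct and let $P_{i,z}=(\alpha_i,\beta_{i,z})$, $i\in[m]$, $z\in[q]$, be $mq$ (distinct) affine $\mathbb{F}_{q^2}$-rational points of $\mathcal{H}_q$. If there exist $L+X+T+\frac{7q^2-3q-6}{2}+1$ $\mathbb{F}_{q^2}$-rational points of $\mathcal{H}_q$ distinct from $P_\infty$, $P_0$ and all $P_{i,z}$, then, with $N=L+X+T+3q^2-q-2$ servers, there exists an $X$-secure and $T$-private information retrieval scheme over $\mathbb{F}_{q^2}$ with rate $$\mathcal{R}^{\mathcal{H}_q}=\frac{L}{N}=1-\frac{X+T+3q^2-q-2}{N}.$$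
   Context: The Hermitian curve $\mathcal{H}_q$ is the projective non-singular curve over $\mathbb{F}_{q^2}$ with affine equation $X^{q+1}=Y^q+Y$; it has $q^3+1$ $\mathbb{F}_{q^2}$-rational points, $P_\infty$ denotes its unique point at infinity and $P_0=(0,0)$. $[n]=\{1,\dots,n\}$. An $X$-secure and $T$-private information retrieval (XSTPIR) scheme with $N$ servers: $N$ non-communicating servers store (encoded) data about $M$ independent files $s_1,\dots,s_M\in\mathbb{F}_{q^2}^L$; a user wishing to retrieve $s_\mu$ sends a query $Q_n$ to server $n$, which returns an answer $A_n$; the user must be able to recover $s_\mu$ from $A_1,\dots,A_N$; $X$-security means the data stored at any $X$ servers reveals nothing about the file contents; $T$-privacy means the queries sent to any $T$ servers reveal nothing about the index $\mu$. The rate is the ratio between the size of the desired file and the total amount of downloaded data; here it equals $L/N$ (one symbol downloaded from each server). *)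

From HB Require Import structures.
From mathcomp Require Import all_boot all_order all_algebra.
Set Implicit Arguments. Unset Strict Implicit. Unset Printing Implicit Defensive.
Import Order.TTheory GRing.Theory Num.Theory.
Local Open Scope ring_scope.

(* Affine points (x, y) with x^(q+1) = y^q + y.  The unique point at
   infinity P_inf is not affine, so "rational points distinct from P_inf"
   are exactly the affine points below. *)
Definition on_hermitian (F : fieldType) (q : nat) (P : F * F) : bool :=
  P.1 ^+ q.+1 == P.2 ^+ q + P.2.

Definition herm_genus (q : nat) : nat := (q * (q - 1)) %/ 2.

Definition prime_power (q : nat) : Prop :=
  exists p k : nat, [/\ prime p, (0 < k)%N & q = p ^ k]%N.

(* Distribution of f : R -> V under the uniform distribution on the finite
   randomness space R is recorded by the counts #|f^-1(v)|. *)
Definition same_distr (R1 R2 : finType) (V : eqType)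
  (f : R1 -> V) (g : R2 -> V) : Prop :=
  forall v : V, #|[set r | f r == v]| = #|[set r | g r == v]|.

Definition restrict (N : nat) (W : Type) (S : {set 'I_N}) (w : 'I_N -> W)
  : 'I_N -> option W :=
  fun n => if n \in S then Some (w n) else None.

(* An XSTPIR scheme with N servers, M files s_1..s_M in F^L.
   - storage randomness rs (uniform on finite RS), server n stores
     store s rs n;
   - user randomness r (uniform on finite RQ, independent of rs), the
     query to server n for desired index mu is query mu r n;
   - server n returns ONE symbol of F, computed from its query and its
     own stored data; hence the download is N symbols and rate = L/N;
   - zero-error decoding of s_mu from the N answers;
   - X-security: the joint distribution of the data stored at any set of
     at most X servers does not depend on the file contents;
   - T-privacy: the joint distribution of the queries sent to any set of
     at most T servers does not depend on mu. *)
Record xstpir_scheme (F : finFieldType) (N M L X T : nat) := XSTPIR {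
  RS : finType;
  Wt : finType;
  RQ : finType;
  Qt : finType;
  RS_nonempty : (0 < #|RS|)%N;
  RQ_nonempty : (0 < #|RQ|)%N;
  store : {ffun 'I_M -> 'rV[F]_L} -> RS -> 'I_N -> Wt;
  query : 'I_M -> RQ -> 'I_N -> Qt;
  answer : 'I_N -> Qt -> Wt -> F;
  decode : 'I_M -> RQ -> ('I_N -> F) -> 'rV[F]_L;
  correct : forall (s : {ffun 'I_M -> 'rV[F]_L}) (rs : RS) (mu : 'I_M) (r : RQ),
    decode mu r (fun n => answer n (query mu r n) (store s rs n)) = s mu;
  X_secure : forall (S : {set 'I_N}), (#|S| <= X)%N ->
    forall s s' : {ffun 'I_M -> 'rV[F]_L},
      same_distr (fun rs : RS => [ffun n => restrict S (store s rs) n])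
                 (fun rs : RS => [ffun n => restrict S (store s' rs) n]);
  T_private : forall (S : {set 'I_N}), (#|S| <= T)%N ->
    forall mu mu' : 'I_M,
      same_distr (fun r : RQ => [ffun n => restrict S (query mu r) n])
                 (fun r : RQ => [ffun n => restrict S (query mu' r) n])
}.

Definition xstpir_rate (N L : nat) : rat := (L%:R / N%:R).

From HB Require Import structures.
From mathcomp Require Import all_boot all_order all_algebra.
From mathcomp Require Import finfield zify ring.
From Stdlib Require Import ClassicalEpsilon.
Set Implicit Arguments. Unset Strict Implicit. Unset Printing Implicit Defensive.
Import Order.TTheory GRing.Theory Num.Theory.
Local Open Scope ring_scope.

(* The scheme is a Hermitian-curve analogue of the Reed-Solomon X-secure T-private scheme.
   Symbol (i, b) of a file is attached to the function y^b / (x - alpha_i).  Server n, sitting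
   at the rational point P_n, stores s_(i,b) + (x - alpha_i) R and receives
   [j = mu] y^b / (x - alpha_i) + R', evaluated at P_n, where R and R' are uniform in
   L((X + 2g - 1) P_inf) and L((T + 2g - 1) P_inf).  Its answer is the value at P_n of
   sum_(i,b) s_mu(i,b) y^b / (x - alpha_i) plus an interference function of pole order below
   q + X + T + 4g.  After multiplication by prod_i (x - alpha_i), two candidate files give a
   function of pole order below N vanishing at the N points P_n, hence zero; at the q points
   above alpha_i it becomes a polynomial of degree < q in y with q roots, so the answers
   determine s_mu.  For security and privacy, every function on a set S of points is the
   restriction of an element of L((|S| + 2g - 1) P_inf), so translating the randomness by such
   interpolants maps what any X (resp. T) servers see for one file (resp. index) onto what they
   see for another.
   Both facts about Riemann-Roch spaces are proved by hand: L(n P_inf) is spanned on the curve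
   by the monomials x^i y^j, j < q, of pole order q i + (q + 1) j, and the footprint of the
   functions vanishing on S (the nongaps that are not leading pole orders of such functions)
   has exactly |S| elements, all below |S| + 2g. *)

Lemma herm_genusE q : herm_genus q = 'C(q, 2).
Proof. by rewrite /herm_genus subn1 divn2 bin2. Qed.

Lemma double_herm_genus q : (2 * herm_genus q = q * (q - 1))%N.
Proof. by rewrite herm_genusE -mul_bin_diag bin1 subn1. Qed.

Lemma card_ltn_pairs n : #|[set p : 'I_n * 'I_n | (p.2 < p.1)%N]| = 'C(n, 2).
Proof.
rewrite -sum1dep_card.
have -> : (\sum_(p : 'I_n * 'I_n | p.2 < p.1) 1 = \sum_(b < n) \sum_(a < n | a < b) 1)%N.
  by rewrite pair_big_dep.
rewrite -bin2_sum big_mkord; apply: eq_bigr => b _.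
by rewrite (big_ord_narrow (ltnW (ltn_ord b))) sum_nat_const card_ord muln1.
Qed.

Lemma indicator_card_pred (F : finFieldType) (u : F) : 1 - u ^+ #|F|.-1 = (u == 0)%:R.
Proof.
have F_gt1 := finNzRing_gt1 F.
have [->|u_neq0] := eqVneq u 0; first by rewrite expr0n -subn1 subn_eq0 leqNgt F_gt1 subr0.
apply/eqP; rewrite subr_eq0 eq_sym; apply/eqP/(mulfI u_neq0).
by rewrite -exprS prednK ?expf_card ?mulr1 // ltnW.
Qed.

Section HermitianFunctions.
Variables (F : finFieldType) (q : nat).
Hypothesis q_gt1 : (1 < q)%N.
Local Notation onH := (@on_hermitian F q).

Let q_gt0 : (0 < q)%N := ltnW q_gt1.

(* The pole order at P_inf of x^i y^j, since x and y have pole orders q and q + 1. *)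
Definition pole (i j : nat) : nat := (q * (i + j) + j)%N.

Lemma pole_div i j : (j < q)%N -> (pole i j %/ q = i + j)%N.
Proof. by move=> lt_jq; rewrite /pole mulnC divnMDl // divn_small ?addn0. Qed.

Lemma pole_mod i j : (j < q)%N -> (pole i j %% q = j)%N.
Proof. by move=> lt_jq; rewrite /pole mulnC modnMDl modn_small. Qed.

Lemma poleD i j i' j' : (pole i j + pole i' j' = pole (i + i') (j + j'))%N.
Proof. rewrite /pole; lia. Qed.

Lemma pole_wrap i k : pole i (q + k) = pole (i + q.+1) k.
Proof. rewrite /pole; lia. Qed.

Definition nongap (t : nat) : bool := (t %% q <= t %/ q)%N.

Lemma nongap_pole i j : (j < q)%N -> nongap (pole i j).
Proof. by move=> lt_jq; rewrite /nongap pole_div // pole_mod // leq_addl. Qed.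

Lemma nongapP t : reflect (exists i j, (j < q)%N /\ t = pole i j) (nongap t).
Proof.
apply: (iffP idP) => [le_mod_div | [i [j [lt_jq ->]]]]; last exact: nongap_pole.
exists (t %/ q - t %% q)%N, (t %% q)%N; split; first exact: ltn_pmod.
by rewrite /pole subnK // mulnC -divn_eq.
Qed.

Lemma nongapD t u : nongap t -> nongap u -> nongap (t + u).
Proof.
case/nongapP=> i [j [lt_jq ->]]; case/nongapP=> i' [j' [lt_j'q ->]].
rewrite poleD; case: (ltnP (j + j') q) => [|le_q]; first exact: nongap_pole.
rewrite -(subnKC le_q) pole_wrap; apply: nongap_pole; lia.
Qed.

Lemma nongapMn t k : nongap t -> nongap (t * k).
Proof.
move=> nongap_t; elim: k => [|k IHk]; first by rewrite muln0 /nongap mod0n.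
by rewrite mulnS nongapD.
Qed.

(* The conductor of the semigroup generated by q and q + 1 is 2 g = q (q - 1). *)
Lemma nongap_ge t : (q * (q - 1) <= t)%N -> nongap t.
Proof.
move=> le_t; rewrite /nongap.
have lt_mod : (t %% q < q)%N by exact: ltn_pmod.
have : (q - 1 <= t %/ q)%N by rewrite leq_divRL // mulnC.
lia.
Qed.

Lemma card_gaps d : (#|[set e : 'I_d | ~~ nongap e]| <= herm_genus q)%N.
Proof.
(* On gaps [e %/ q %% q = e %/ q]; the modulus only makes the map total. *)
pose split_pole (e : 'I_d) : 'I_q * 'I_q :=
  (Ordinal (ltn_pmod e q_gt0), Ordinal (ltn_pmod (e %/ q) q_gt0)).
have gapE e : ~~ nongap e -> (e %/ q %% q = e %/ q /\ e %/ q < e %% q)%N.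
  rewrite /nongap -ltnNge => lt_div_mod; split=> //.
  by rewrite modn_small // (ltn_trans lt_div_mod) ?ltn_pmod.
have split_inj : {in [set e : 'I_d | ~~ nongap e] &, injective split_pole}.
  move=> e1 e2; rewrite !inE => /gapE[div1 _] /gapE[div2 _] [mod12].
  by rewrite div1 div2 => div12; apply: val_inj; rewrite /= (divn_eq e1 q) mod12 div12 -divn_eq.
rewrite herm_genusE -card_ltn_pairs -(card_in_imset split_inj).
apply/subset_leq_card/subsetP => p /imsetP[e]; rewrite inE => /gapE[div_e lt_e] ->.
by rewrite inE /= div_e.
Qed.

Lemma card_nongap_pairs t :
  (t.+1 <= #|[set e : 'I_t.+1 | nongap e && nongap (t - e)]| + 2 * herm_genus q)%N.
Proof.
set Om := [set e : 'I_t.+1 | _]; set G1 := [set e : 'I_t.+1 | ~~ nongap e].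
set G2 := [set e : 'I_t.+1 | ~~ nongap (t - e)].
have cardG2 : #|G2| = #|G1|.
  have -> : G2 = @rev_ord t.+1 @^-1: G1 by apply/setP => e; rewrite !inE /= subSS.
  by rewrite card_preimset //; apply: rev_ord_inj.
have cover : [set: 'I_t.+1] \subset Om :|: (G1 :|: G2).
  by apply/subsetP => e _; rewrite !inE; case: (nongap e); case: (nongap (t - e)).
have [cardU _] := leq_card_setU Om (G1 :|: G2).
have [cardU12 _] := leq_card_setU G1 G2.
have gapsG1 := card_gaps t.+1.
have := subset_leq_card cover; rewrite cardsT card_ord => /leq_trans; apply.
apply: (leq_trans cardU); rewrite leq_add2l; apply: (leq_trans cardU12).
by rewrite cardG2 mul2n -addnn leq_add.
Qed.

(* For [t = pole i j] with [j < q] this is x^i y^j; the gaps get the zero function. *)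
Definition monomial (t : nat) (P : F * F) : F :=
  if nongap t then P.1 ^+ (t %/ q - t %% q) * P.2 ^+ (t %% q) else 0.

Lemma monomial_pole i j P : (j < q)%N -> monomial (pole i j) P = P.1 ^+ i * P.2 ^+ j.
Proof. by move=> lt_jq; rewrite /monomial nongap_pole // pole_div // pole_mod // addnK. Qed.

Lemma monomial_gap t P : ~~ nongap t -> monomial t P = 0.
Proof. by rewrite /monomial => /negbTE ->. Qed.

Lemma monomial0 P : monomial 0 P = 1.
Proof. by have := @monomial_pole 0 0 P q_gt0; rewrite /pole !addn0 muln0 mulr1. Qed.

Lemma monomialX P : monomial q P = P.1.
Proof. by have := @monomial_pole 1 0 P q_gt0; rewrite /pole !addn0 muln1 mulr1. Qed.

Lemma monomialY P : monomial q.+1 P = P.2.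
Proof. by have := @monomial_pole 0 1 P q_gt1; rewrite /pole add0n muln1 addn1 mul1r. Qed.

Section Span.
Variables (A : pred (F * F)) (D : pred nat).

Definition mspan (n : nat) (f : F * F -> F) : Prop :=
  exists c : nat -> F, forall P, A P -> f P = \sum_(t < n | D t) c t * monomial t P.

Lemma mspan_ext n (f g : F * F -> F) :
  (forall P, A P -> f P = g P) -> mspan n f -> mspan n g.
Proof. by move=> fg [c fc]; exists c => P AP; rewrite -fg // fc. Qed.

Lemma mspan0 n : mspan n (fun=> 0).
Proof. by exists (fun=> 0) => P _; rewrite big1 // => t _; rewrite mul0r. Qed.

Lemma mspanD n (f g : F * F -> F) : mspan n f -> mspan n g -> mspan n (fun P => f P + g P).
Proof.
move=> [c fc] [d gd]; exists (fun t => c t + d t) => P AP.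
by rewrite fc // gd // -big_split; apply: eq_bigr => t _; rewrite mulrDl.
Qed.

Lemma mspanZ n a (f : F * F -> F) : mspan n f -> mspan n (fun P => a * f P).
Proof.
move=> [c fc]; exists (fun t => a * c t) => P AP.
by rewrite fc // mulr_sumr; apply: eq_bigr => t _; rewrite mulrA.
Qed.

Lemma mspanN n (f : F * F -> F) : mspan n f -> mspan n (fun P => - f P).
Proof. by move/(mspanZ (-1)); apply: mspan_ext => P _; rewrite mulN1r. Qed.

Lemma mspanB n (f g : F * F -> F) : mspan n f -> mspan n g -> mspan n (fun P => f P - g P).
Proof. by move=> mf /mspanN; apply: mspanD. Qed.

Lemma mspan_sum n (I : Type) (s : seq I) (Pr : pred I) (f : I -> F * F -> F) :
  (forall i, Pr i -> mspan n (f i)) -> mspan n (fun P => \sum_(i <- s | Pr i) f i P).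
Proof.
move=> mf; elim: s => [|i s IHs].
  by apply: mspan_ext (mspan0 n) => P _; rewrite big_nil.
case Pr_i: (Pr i).
  by apply: mspan_ext (mspanD (mf i Pr_i) IHs) => P _; rewrite big_cons Pr_i.
by apply: mspan_ext IHs => P _; rewrite big_cons Pr_i.
Qed.

Lemma mspan_widen n n' (f : F * F -> F) : (n <= n')%N -> mspan n f -> mspan n' f.
Proof.
move=> le_nn' [c fc]; exists (fun t => if (t < n)%N then c t else 0) => P AP.
rewrite fc // (big_ord_widen_cond n' D (fun t => c t * monomial t P) le_nn').
by rewrite big_mkcondr /=; apply: eq_bigr => t _; case: ifP; rewrite ?mul0r.
Qed.

Lemma mspan_monomial n t : (t < n)%N -> D t -> mspan n (monomial t).
Proof.
move=> lt_tn Dt; exists (fun u => (u == t)%:R) => P _.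
rewrite (bigD1 (Ordinal lt_tn)) //= eqxx mul1r big1 ?addr0 // => u /andP[_ ne_ut].
by rewrite (_ : (u == t :> nat) = false) ?mul0r //; apply/negbTE.
Qed.

End Span.

Lemma mspan_sub (A A' : pred (F * F)) (D : pred nat) n f :
  (forall P, A' P -> A P) -> mspan A D n f -> mspan A' D n f.
Proof. by move=> sA [c fc]; exists c => P /sA; apply: fc. Qed.

Lemma mspan_trans A (D D' : pred nat) n n' f :
  (forall t, (t < n)%N -> D t -> mspan A D' n' (monomial t)) ->
  mspan A D n f -> mspan A D' n' f.
Proof.
move=> mono [c fc]; apply: mspan_ext (fun P AP => esym (fc P AP)) _.
by apply: mspan_sum => t Dt; apply/mspanZ/mono.
Qed.

(* The Riemann-Roch space L((n - 1) P_inf), as functions on the affine points of the curve. *)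
Local Notation inL n := (mspan onH predT n).

Lemma inL_monomial n t : (t < n)%N -> inL n (monomial t).
Proof. by move=> lt_tn; apply: mspan_monomial. Qed.

Lemma inL0_eq0 f P : inL 0 f -> onH P -> f P = 0.
Proof. by move=> [c fc] /fc ->; rewrite big_ord0. Qed.

Lemma inL_const a : inL 1 (fun=> a).
Proof.
apply: mspan_ext (mspanZ a (inL_monomial (ltnSn 0))) => P _.
by rewrite monomial0 mulr1.
Qed.

Lemma monomial_mul_sub t u : nongap t -> nongap u ->
  inL (t + u) (fun P => monomial t P * monomial u P - monomial (t + u) P).
Proof.
case/nongapP=> i [j [lt_jq ->]]; case/nongapP=> i' [j' [lt_j'q ->]].
rewrite poleD; case: (ltnP (j + j') q) => [lt_q|le_q].
  apply: mspan_ext (mspan0 _ _ _) => P _.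
  by rewrite !monomial_pole // !exprD mulrACA subrr.
set k := (j + j' - q)%N; have jj'E : (j + j' = q + k)%N by rewrite subnKC.
have lt_k1q : (k.+1 < q)%N by rewrite /k; lia.
have lt_pole : (pole (i + i') k.+1 < pole (i + i' + q.+1) k)%N.
  have : (q < q * q)%N by rewrite ltn_Pmull.
  rewrite /pole; lia.
rewrite jj'E pole_wrap.
apply: mspan_ext (mspanN (inL_monomial lt_pole)) => P onP.
have yqE : P.2 ^+ q = P.1 ^+ q.+1 - P.2 by rewrite (eqP onP) addrK.
rewrite !monomial_pole ?(ltnW lt_k1q) // mulrACA -!exprD jj'E !exprD yqE.
rewrite exprSr; ring.
Qed.

Lemma inL_monomial_mul t u : inL (t + u).+1 (fun P => monomial t P * monomial u P).
Proof.
have [nt|gt] := boolP (nongap t); last first.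
  by apply: mspan_ext (mspan0 _ _ _) => P _; rewrite monomial_gap ?mul0r.
have [nu|gu] := boolP (nongap u); last first.
  by apply: mspan_ext (mspan0 _ _ _) => P _; rewrite (monomial_gap _ gu) mulr0.
have mono_tu := inL_monomial (ltnSn (t + u)).
apply: mspan_ext (mspanD (mspan_widen (leqnSn _) (monomial_mul_sub nt nu)) mono_tu) => P _.
by rewrite subrK.
Qed.

Lemma inL_mul n n' f g : inL n f -> inL n' g -> inL (n + n').-1 (fun P => f P * g P).
Proof.
case: n => [|n] fL gL.
  by apply: mspan_ext (mspan0 _ _ _) => P onP; rewrite (inL0_eq0 fL onP) mul0r.
case: n' gL => [|n'] gL.
  by apply: mspan_ext (mspan0 _ _ _) => P onP; rewrite (inL0_eq0 gL onP) mulr0.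
case: fL => c fc; case: gL => d gd.
have prodE P : onH P -> \sum_(t < n.+1) \sum_(u < n'.+1)
    c t * d u * (monomial t P * monomial u P) = f P * g P.
  move=> onP; rewrite fc // gd // big_distrlr.
  by apply: eq_bigr => t _; apply: eq_bigr => u _; rewrite mulrACA.
apply: mspan_ext prodE _; apply: mspan_sum => t _; apply: mspan_sum => u _.
apply/mspanZ/(mspan_widen _ (inL_monomial_mul t u)).
by have := ltn_ord t; have := ltn_ord u; rewrite addSn /=; lia.
Qed.

Lemma inL_exp n f k : inL n.+1 f -> inL (n * k).+1 (fun P => f P ^+ k).
Proof.
move=> fL; elim: k => [|k IHk].
  by rewrite muln0; apply: mspan_ext (inL_const 1) => P _; rewrite expr0.
have := inL_mul fL IHk; rewrite addSn /= addnS -mulnS.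
by apply: mspan_ext => P _; rewrite exprS.
Qed.

Lemma inL_x_sub a : inL q.+1 (fun P => P.1 - a).
Proof.
apply: mspanB; last exact: mspan_widen (inL_const a).
by apply: mspan_ext (inL_monomial (ltnSn q)) => P _; rewrite monomialX.
Qed.

Lemma inL_y_sub b : inL q.+2 (fun P => P.2 - b).
Proof.
apply: mspanB; last exact: mspan_widen (inL_const b).
by apply: mspan_ext (inL_monomial (ltnSn q.+1)) => P _; rewrite monomialY.
Qed.

Lemma inL_all (g : F * F -> F) : exists n, inL n g.
Proof.
pose k := #|F|.-1.
pose delta (Q P : F * F) := (1 - (P.1 - Q.1) ^+ k) * (1 - (P.2 - Q.2) ^+ k).
have deltaE Q P : delta Q P = (P == Q)%:R.
  case: P Q => [x y] [a b].
  by rewrite /delta !indicator_card_pred !subr_eq0 -natrM mulnb xpair_eqE.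
exists ((q * k).+1 + (q.+1 * k).+1).-1.
have gE P : onH P -> \sum_Q g Q * delta Q P = g P.
  move=> _; rewrite (bigD1 P) //= deltaE eqxx mulr1 big1 ?addr0 // => Q neQP.
  by rewrite deltaE eq_sym (negbTE neQP) mulr0.
apply: mspan_ext gE _; apply: mspan_sum => Q _; apply/mspanZ/inL_mul.
  exact: mspanB (mspan_widen (ltn0Sn _) (inL_const 1)) (inL_exp k (inL_x_sub _)).
exact: mspanB (mspan_widen (ltn0Sn _) (inL_const 1)) (inL_exp k (inL_y_sub _)).
Qed.

(* [f] has pole order exactly [w] at P_inf. *)
Definition has_lead (w : nat) (f : F * F -> F) : Prop :=
  nongap w /\ exists2 a : F, a != 0 & inL w (fun P => f P - a * monomial w P).

Lemma has_lead_ext w f g : (forall P, onH P -> f P = g P) -> has_lead w f -> has_lead w g.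
Proof.
move=> fg [nw [a a_neq0 fL]]; split=> //; exists a => //.
by apply: mspan_ext fL => P onP; rewrite fg.
Qed.

Lemma has_lead_inL w f : has_lead w f -> inL w.+1 f.
Proof.
move=> [_ [a _ fL]].
have mono_w := mspanZ a (inL_monomial (ltnSn w)).
by apply: mspan_ext (mspanD (mspan_widen (leqnSn w) fL) mono_w) => P _; rewrite subrK.
Qed.

Lemma has_lead_monomial v : nongap v -> has_lead v (monomial v).
Proof.
move=> nv; split=> //; exists 1; first exact: oner_neq0.
by apply: mspan_ext (mspan0 _ _ _) => P _; rewrite mul1r subrr.
Qed.

Lemma has_leadM w u f g :
  has_lead w f -> has_lead u g -> has_lead (w + u) (fun P => f P * g P).
Proof.
move=> [nw [a a_neq0 fL]] [nu [b b_neq0 gL]]; split; first exact: nongapD.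
exists (a * b); first exact: mulf_neq0.
have lowL : inL (w + u) (fun P =>
    a * b * (monomial w P * monomial u P - monomial (w + u) P)
    + a * (monomial w P * (g P - b * monomial u P))
    + b * ((f P - a * monomial w P) * monomial u P)
    + (f P - a * monomial w P) * (g P - b * monomial u P)).
  apply: mspanD; [apply: mspanD; [apply: mspanD|]|].
  - exact/mspanZ/monomial_mul_sub.
  - by apply: mspanZ; have := inL_mul (inL_monomial (ltnSn w)) gL; rewrite addSn.
  - by apply: mspanZ; have := inL_mul fL (inL_monomial (ltnSn u)); rewrite addnS.
  - exact: mspan_widen (leq_pred _) (inL_mul fL gL).
by apply: mspan_ext lowL => P _; ring.
Qed.

Lemma has_lead_x_sub a : has_lead q (fun P => P.1 - a).
Proof.
split; first by rewrite /nongap modnn.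
exists 1; first exact: oner_neq0.
apply: mspan_ext (mspan_widen q_gt0 (inL_const (- a))) => P _.
by rewrite monomialX mul1r addrAC subrr add0r.
Qed.

Lemma has_lead_prod_x_sub (s : seq F) :
  has_lead (q * size s) (fun P => \prod_(a <- s) (P.1 - a)).
Proof.
elim: s => [|a s IHs].
  rewrite muln0; apply: has_lead_ext (has_lead_monomial _) => [P _|].
    by rewrite monomial0 big_nil.
  by rewrite /nongap mod0n.
have := has_leadM (has_lead_x_sub a) IHs; rewrite -mulnS.
by apply: has_lead_ext => P _; rewrite big_cons.
Qed.

Lemma inL_prod_x_sub (I : finType) (Pr : pred I) (a : I -> F) :
  inL (q * #|I|).+1 (fun P => \prod_(i | Pr i) (P.1 - a i)).
Proof.
have := has_lead_inL (has_lead_prod_x_sub [seq a i | i <- index_enum I & Pr i]).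
rewrite size_map size_filter => /(mspan_widen (n' := (q * #|I|).+1)).
have sizeI : size (index_enum I) = #|I| by rewrite cardT enumT [index_enum _]unlock.
rewrite ltnS leq_mul2l -sizeI count_size orbT => /(_ isT).
by apply: mspan_ext => P _; rewrite big_map big_filter.
Qed.

Section Footprint.
Variable S : {set F * F}.
Hypothesis S_on : forall P, P \in S -> onH P.

Definition vanishing_lead (v : nat) : Prop :=
  exists2 f, has_lead v f & forall P, P \in S -> f P = 0.

Definition vanishing_leadb (v : nat) : bool :=
  if excluded_middle_informative (vanishing_lead v) then true else false.

Lemma vanishing_leadP v : reflect (vanishing_lead v) (vanishing_leadb v).
Proof. by rewrite /vanishing_leadb; case: excluded_middle_informative; constructor. Qed.

Lemma vanishing_leadD w u : vanishing_lead w -> nongap u -> vanishing_lead (w + u).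
Proof.
move=> [f fw f0] nu; exists (fun P => f P * monomial u P).
  exact: has_leadM fw (has_lead_monomial nu).
by move=> P SP; rewrite f0 // mul0r.
Qed.

Lemma vanishing_lead_ge w v : vanishing_lead w -> (w + q * q <= v)%N -> vanishing_lead v.
Proof.
move=> vw le_v; rewrite -(subnKC (leq_trans (leq_addr _ _) le_v)).
apply: vanishing_leadD vw _; apply: nongap_ge.
have : (q * (q - 1) <= q * q)%N by rewrite leq_mul2l leq_subr orbT.
lia.
Qed.

(* The footprint (delta set) of the ideal of functions vanishing on S; it has #|S| elements. *)
Definition footprint (t : nat) : bool := nongap t && ~~ vanishing_leadb t.

Lemma footprint_modn_inj w t1 t2 : vanishing_lead w ->
  footprint t1 -> footprint t2 -> t1 = t2 %[mod w] -> t1 = t2.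
Proof.
move=> vw; wlog le12 : t1 t2 / (t1 <= t2)%N.
  move=> sym fp1 fp2 eq12; case: (leqP t1 t2) => [le12|/ltnW le21]; first exact: sym.
  exact/esym/(sym _ _ le21 fp2 fp1 (esym eq12)).
move=> /andP[n1 _] /andP[_ not_van2] /eqP; rewrite eq_sym eqn_mod_dvd // => /dvdnP[k].
case: k => [|k] t21E; first by apply/eqP; rewrite eqn_leq le12 -subn_eq0 t21E.
case/negP: not_van2; apply/vanishing_leadP.
have -> : t2 = (w + (t1 + w * k))%N by move: t21E; rewrite mulSn mulnC; lia.
case: (vw) => f [nw _] _; apply: vanishing_leadD vw _.
exact/nongapD/nongapMn.
Qed.

Lemma footprint_coef_eq0 n (c : nat -> F) :
  (forall P, P \in S -> \sum_(t < n | footprint t) c t * monomial t P = 0) ->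
  forall t, (t < n)%N -> footprint t -> c t = 0.
Proof.
elim: n c => [//|n IHn] c c0 t.
have sum_recr P : \sum_(t < n.+1 | footprint t) c t * monomial t P =
    \sum_(t < n | footprint t) c t * monomial t P + (if footprint n then c n * monomial n P else 0).
  by rewrite big_mkcond big_ord_recr /= -big_mkcond.
have cn0 : footprint n -> c n = 0.
  move=> fpn; have /andP[nn not_van] := fpn; move: not_van.
  apply: contraNeq => cn_neq0; apply/vanishing_leadP.
  exists (fun P => \sum_(t < n.+1 | footprint t) c t * monomial t P) => //.
  split=> //; exists (c n) => //.
  have lowL : mspan onH footprint n (fun P => \sum_(t < n | footprint t) c t * monomial t P).
    by exists c.
  apply: mspan_ext (mspan_trans (fun t lt_tn _ => inL_monomial lt_tn) lowL) => P _.
  by rewrite sum_recr fpn addrK.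
rewrite ltnS leq_eqVlt => /orP[/eqP-> //|lt_tn]; apply: IHn lt_tn => P SP.
by rewrite -[RHS](c0 P SP) sum_recr; case: ifP => [/cn0->|_]; rewrite ?mul0r addr0.
Qed.

Definition supported_in (T : finType) (A : {set T}) := pffun_on (0 : F) A predT.

Lemma card_supported_in (T : finType) (A : {set T}) : #|supported_in A| = (#|F| ^ #|A|)%N.
Proof. by rewrite card_pffun_on. Qed.

Lemma supported_inP (T : finType) (A : {set T}) (g : {ffun T -> F}) :
  reflect (forall x, x \notin A -> g x = 0) (g \in supported_in A).
Proof.
apply: (iffP pffun_onP) => [[/supportP g0 _] //|g0].
by split=> [|x _ //]; apply/supportP.
Qed.

Definition footprint_eval B (d : {ffun 'I_B -> F}) : {ffun F * F -> F} :=
  [ffun P => if P \in S then \sum_(t < B | footprint t) d t * monomial t P else 0].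

Lemma card_footprint_le B : (#|[set t : 'I_B | footprint t]| <= #|S|)%N.
Proof.
set fp := [set t : 'I_B | footprint t].
have eval_inj : {in supported_in fp &, injective (@footprint_eval B)}.
  move=> d1 d2 /supported_inP d1_0 /supported_inP d2_0 eq_eval; apply/ffunP => t.
  pose e u := odflt 0 (omap (fun i : 'I_B => d1 i - d2 i) (insub u)).
  have eE (i : 'I_B) : e i = d1 i - d2 i by rewrite /e valK.
  have e0 P : P \in S -> \sum_(u < B | footprint u) e u * monomial u P = 0.
    move=> SP; rewrite (eq_bigr (fun u : 'I_B => d1 u * monomial u P - d2 u * monomial u P)).
      have := congr1 (fun h : {ffun F * F -> F} => h P) eq_eval.
      by rewrite sumrB !ffunE SP => ->; rewrite subrr.
    by move=> u _; rewrite eE mulrBl.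
  have [fpt|not_fpt] := boolP (t \in fp).
    apply/eqP; rewrite -subr_eq0 -eE; apply/eqP/(footprint_coef_eq0 e0) => //.
    by move: fpt; rewrite inE.
  by rewrite d1_0 ?d2_0.
have sub : @footprint_eval B @: supported_in fp \subset supported_in S.
  by apply/subsetP => _ /imsetP[d _ ->]; apply/supported_inP => P /negbTE SP; rewrite ffunE SP.
have := subset_leq_card sub; rewrite card_in_imset // !card_supported_in.
by rewrite leq_exp2l // finNzRing_gt1.
Qed.

Lemma footprint_lt t : footprint t -> (t < #|S| + 2 * herm_genus q)%N.
Proof.
move=> fpt; set Om := [set e : 'I_t.+1 | nongap e && nongap (t - e)].
have sub : @rev_ord t.+1 @: Om \subset [set u : 'I_t.+1 | footprint u].
  apply/subsetP => u /imsetP[e]; rewrite !inE => /andP[ne nte] ->.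
  rewrite /footprint /= subSS nte /=; apply: contraL fpt => /vanishing_leadP vte.
  rewrite negb_and negbK; apply/orP; right; apply/vanishing_leadP.
  by rewrite -(subnK (ltnSE (ltn_ord e))); apply: vanishing_leadD.
have OmS : (#|Om| <= #|S|)%N.
  rewrite -(card_imset _ (@rev_ord_inj t.+1)).
  exact: leq_trans (subset_leq_card sub) (card_footprint_le _).
by apply: leq_trans (card_nongap_pairs t) _; rewrite leq_add2r.
Qed.

Section LargeOrders.
Variable B : nat.
Hypothesis vanishing_large : forall v, (B <= v)%N -> vanishing_lead v.

Lemma mspan_footprint v : mspan (mem S) footprint B (monomial v).
Proof.
elim/ltn_ind: v => v IHv.
have [nv|gv] := boolP (nongap v); last first.
  by apply: mspan_ext (mspan0 _ _ _) => P _; rewrite monomial_gap.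
have [/vanishing_leadP[f [_ [a a_neq0 [c fc]]] f0]|not_van] := boolP (vanishing_leadb v).
  have vE P : P \in S -> - a^-1 * (\sum_(t < v | predT t) c t * monomial t P) = monomial v P.
      move=> SP; rewrite -fc ?S_on // f0 // sub0r mulrN mulNr opprK mulrA.
    by rewrite (mulVf a_neq0) mul1r.
  apply: mspan_ext vE _; apply/mspanZ/mspan_sum => t _.
  exact/mspanZ/IHv/ltn_ord.
have lt_vB : (v < B)%N.
  by rewrite ltnNge; apply: contra not_van => /vanishing_large /vanishing_leadP.
by apply: mspan_monomial lt_vB _; rewrite /footprint nv not_van.
Qed.

Lemma mspan_footprint_inL n f : inL n f -> mspan (mem S) footprint B f.
Proof. by move=> fL; apply: mspan_trans (fun t _ _ => mspan_footprint t) (mspan_sub S_on fL). Qed.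

Lemma card_le_footprint : (#|S| <= #|[set t : 'I_B | footprint t]|)%N.
Proof.
set fp := [set t : 'I_B | footprint t].
have sub : supported_in S \subset @footprint_eval B @: supported_in fp.
  apply/subsetP => g /supported_inP g0.
  have [n gL] := inL_all g; have [d gd] := mspan_footprint_inL gL.
  apply/imsetP; exists [ffun t : 'I_B => if footprint t then d t else 0].
    by apply/supported_inP => t; rewrite inE ffunE => /negbTE->.
  apply/ffunP => P; rewrite ffunE; case: ifP => [SP|/negbT/g0 //].
  by rewrite gd //; apply: eq_bigr => t fpt; rewrite ffunE fpt.
have := subset_leq_card sub; rewrite card_supported_in.
move/leq_trans/(_ (leq_imset_card _ _)); rewrite card_supported_in.
by rewrite leq_exp2l // finNzRing_gt1.
Qed.

End LargeOrders.

Lemma card_le_lead w f : has_lead w f -> (forall P, P \in S -> f P = 0) -> (#|S| <= w)%N.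
Proof.
move=> fw f0; have vw : vanishing_lead w by exists f.
case: w fw vw => [|w] fw vw.
  have [_ [a a_neq0 fL]] := fw; rewrite leqn0 cards_eq0; apply/eqP/setP => P.
  rewrite inE; apply/negbTE/negP => SP; move/eqP: (inL0_eq0 fL (S_on SP)).
  by rewrite f0 // monomial0 mulr1 sub0r oppr_eq0 (negbTE a_neq0).
pose B := (w.+1 + q * q)%N; pose modw (t : 'I_B) : 'I_w.+1 := Ordinal (ltn_pmod t (ltn0Sn w)).
have modw_inj : {in [set t : 'I_B | footprint t] &, injective modw}.
  move=> t1 t2; rewrite !inE => fp1 fp2 [eq12]; apply: val_inj.
  exact: footprint_modn_inj vw fp1 fp2 eq12.
apply: leq_trans (card_le_footprint (fun v => vanishing_lead_ge vw)) _.
by rewrite -(card_in_imset modw_inj); apply: leq_trans (max_card _) _; rewrite card_ord.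
Qed.

End Footprint.

Lemma inL_eq0 (S : {set F * F}) n f : (forall P, P \in S -> onH P) ->
  inL n f -> (forall P, P \in S -> f P = 0) -> (n <= #|S|)%N ->
  forall P, onH P -> f P = 0.
Proof.
move=> S_on; elim: n f => [|n IHn] f fL f0 le_nS; first by move=> P; apply: inL0_eq0.
case: fL => c fc.
have [/andP[nn cn_neq0]|not_lead] := boolP (nongap n && (c n != 0)).
  have fn : has_lead n f.
    split=> //; exists (c n) => //; exists c => P onP.
    by rewrite fc // big_ord_recr /= addrK.
  by have := card_le_lead S_on fn f0; rewrite leqNgt le_nS.
apply: IHn (ltnW le_nS); last exact: f0.
exists c => P onP; rewrite fc // big_ord_recr /=.
move: not_lead; rewrite negb_and negbK => /orP[gn|/eqP->].
  by rewrite monomial_gap // mulr0 addr0.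
by rewrite mul0r addr0.
Qed.

Lemma inL_interpolate (S : {set F * F}) n (g : F * F -> F) :
  (forall P, P \in S -> onH P) -> (#|S| + 2 * herm_genus q <= n)%N ->
  mspan (mem S) predT n g.
Proof.
move=> S_on le_n.
have vS : vanishing_lead S (q * size [seq Q.1 | Q <- enum S]).
  exists (fun P => \prod_(a <- [seq Q.1 | Q <- enum S]) (P.1 - a)).
    exact: has_lead_prod_x_sub.
  by move=> P SP; rewrite big_map (big_rem P) ?mem_enum //= subrr mul0r.
have [n0 gL] := inL_all g.
apply: mspan_trans (mspan_footprint_inL S_on (fun v => vanishing_lead_ge vS) gL) => t _ fpt.
exact: mspan_monomial (leq_trans (footprint_lt fpt) le_n) _.
Qed.

End HermitianFunctions.

Lemma prime_power_gt1 q : prime_power q -> (1 < q)%N.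
Proof.
case=> p [k [p_prime k_gt0 ->]].
by rewrite -(expn0 p) ltn_exp2l ?prime_gt1.
Qed.

Lemma xstpir_rate_split L K : (0 < L + K)%N ->
  xstpir_rate (L + K) L = 1 - K%:R / (L + K)%:R.
Proof.
move=> LK_gt0; rewrite /xstpir_rate natrD.
have LK_neq0 : (L%:R + K%:R : rat) != 0 by rewrite -natrD pnatr_eq0 -lt0n.
by apply/eqP; rewrite eq_sym subr_eq -mulrDl divff.
Qed.

Lemma pick_points (T : finType) (A : {set T}) N : (N <= #|A|)%N ->
  exists2 pts : 'I_N -> T, injective pts & forall n, pts n \in A.
Proof.
move=> le_NA; exists (fun n => enum_val (widen_ord le_NA n)); last by move=> n; apply: enum_valP.
by move=> n1 n2 /enum_val_inj /(congr1 val) /= eq12; apply: val_inj.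
Qed.

Lemma same_distr_addr (J I : finType) (V : eqType) (R : finZmodType)
  (f g : {ffun J -> {ffun I -> R}} -> V) D :
  (forall r, g (r + D) = f r) -> same_distr f g.
Proof.
move=> gf v; pose shift (r : {ffun J -> {ffun I -> R}}) := r + D.
have -> : [set r | f r == v] = shift @^-1: [set r | g r == v].
  by apply/setP => r; rewrite !inE gf.
by rewrite card_preimset //; apply: addIr.
Qed.

Lemma roots_coef_eq0 (F : fieldType) n (c r : 'I_n -> F) : injective r ->
  (forall z, \sum_(b < n) c b * r z ^+ b = 0) -> forall b, c b = 0.
Proof.
move=> r_inj roots b; pose p : {poly F} := \poly_(i < n) odflt 0 (omap c (insub i)).
have p0 : p = 0.
  apply: (@roots_geq_poly_eq0 _ p [seq r z | z <- enum 'I_n]).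
  - apply/allP => _ /mapP[z _ ->]; rewrite /root horner_poly; apply/eqP.
    by rewrite -[RHS](roots z); apply: eq_bigr => i _; rewrite valK.
  - by rewrite map_inj_uniq ?enum_uniq.
  - by rewrite size_map size_enum_ord size_poly.
by have := congr1 (fun p : {poly F} => p`_b) p0; rewrite coef_poly ltn_ord valK coef0.
Qed.

(* y^q + y = a^(q + 1) has at most q roots. *)
Lemma hermitian_fibre (F : fieldType) q (a : F) (b : 'I_q -> F) : (1 < q)%N ->
  injective b -> (forall z, on_hermitian q (a, b z)) ->
  forall P, on_hermitian q P -> P.1 = a -> exists z, P.2 = b z.
Proof.
move=> q_gt1 b_inj b_on P P_on Pa.
suff /existsP[z /eqP] : [exists z, P.2 == b z] by exists z.
apply/contraT => /existsPn P_new.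
pose p : {poly F} := 'X^q + 'X - (a ^+ q.+1)%:P.
have size_p : size p = q.+1.
  by rewrite /p -addrA size_addl size_polyXn // size_XsubC ltnS.
have rootp y : on_hermitian q (a, y) -> root p y.
  by rewrite /root /on_hermitian /= !hornerE => /eqP->; rewrite subrr.
have p_neq0 : p != 0 by rewrite -size_poly_eq0 size_p.
have := @max_poly_roots _ p (P.2 :: [seq b z | z <- enum 'I_q]) p_neq0.
rewrite size_p /= size_map size_enum_ord ltnn; apply.
  rewrite rootp -?Pa -?surjective_pairing //=.
  by apply/allP => _ /mapP[z _ ->]; apply: rootp.
rewrite map_inj_uniq ?enum_uniq // andbT; apply/mapP => -[z _ ez].
by have := P_new z; rewrite ez eqxx.
Qed.

Section Scheme.
Variables (F : finFieldType) (q m L X T N M : nat).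
Hypothesis q_gt1 : (1 < q)%N.
Variables (alpha : 'I_m -> F) (beta : 'I_m -> 'I_q -> F).
Hypothesis alpha_inj : injective alpha.
Hypothesis beta_on : forall i z, on_hermitian q (alpha i, beta i z).
Hypothesis beta_inj : forall i, injective (beta i).
Hypothesis L_le : (L <= m * q)%N.
Variable pts : 'I_N -> F * F.
Hypothesis pts_inj : injective pts.
Hypothesis pts_on : forall n, on_hermitian q (pts n).
Hypothesis pts_off : forall n i, (pts n).1 != alpha i.

Local Notation onH := (@on_hermitian F q).
Local Notation inL n := (mspan q onH predT n).
Local Notation g := (herm_genus q).
Local Notation nX := (X + 2 * g)%N.
Local Notation nT := (T + 2 * g)%N.
Local Notation nI := (q + nX + nT)%N.
Hypothesis N_large : (q * m + nI <= N)%N.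

Let q_gt0 : (0 < q)%N := ltnW q_gt1.

Local Notation piece := ('I_m * 'I_q)%type.

(* File [v] is cut into the m q symbols [v_(i, b)] := v_(q i + b), padded with zeros beyond L. *)
Definition coord (v : 'rV[F]_L) (k : piece) : F :=
  odflt 0 (omap (fun l : 'I_L => v ord0 l) (insub (q * k.1 + k.2)%N)).

Lemma coordB v w k : coord (v - w) k = coord v k - coord w k.
Proof. by rewrite /coord; case: insubP => [l _ _|_] /=; rewrite ?mxE ?subr0. Qed.

Lemma coord_eq0 v : (forall k, coord v k = 0) -> v = 0.
Proof.
move=> v0; apply/rowP => l; rewrite mxE.
have lt_lq : (l %/ q < m)%N by rewrite ltn_divLR // (leq_trans (ltn_ord l)).
have := v0 (Ordinal lt_lq, Ordinal (ltn_pmod l q_gt0)).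
by rewrite /coord /= mulnC -divn_eq valK.
Qed.

Definition piece_fn (k : piece) (P : F * F) : F := P.2 ^+ k.2 / (P.1 - alpha k.1).

Definition file_fn (v : 'rV[F]_L) (P : F * F) : F := \sum_k coord v k * piece_fn k P.

Lemma file_fnB v w P : file_fn (v - w) P = file_fn v P - file_fn w P.
Proof. by rewrite /file_fn -sumrB; apply: eq_bigr => k _; rewrite coordB mulrBl. Qed.

Definition feval n (c : {ffun 'I_n -> F}) (P : F * F) : F := \sum_(t < n) c t * monomial q t P.

Lemma feval_inL n (c : {ffun 'I_n -> F}) : inL n (feval c).
Proof.
by exists (fun t => odflt 0 (omap c (insub t))) => P _; apply: eq_bigr => t _; rewrite valK.
Qed.

Lemma mspan_feval (A : pred (F * F)) n f :
  mspan q A predT n f -> exists c : {ffun 'I_n -> F}, forall P, A P -> f P = feval c P.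
Proof.
case=> c fc; exists [ffun t : 'I_n => c t] => P AP.
by rewrite fc //; apply: eq_bigr => t _; rewrite ffunE.
Qed.

Lemma fevalD n (c d : {ffun 'I_n -> F}) P : feval (c + d) P = feval c P + feval d P.
Proof. by rewrite /feval -big_split; apply: eq_bigr => t _; rewrite ffunE mulrDl. Qed.

Lemma feval_scale n a (c : {ffun 'I_n -> F}) P : feval [ffun t => a * c t] P = a * feval c P.
Proof. by rewrite /feval mulr_sumr; apply: eq_bigr => t _; rewrite ffunE mulrA. Qed.

Lemma interpolate_at (S : {set 'I_N}) n (target : F * F -> F) : (#|S| + 2 * g <= n)%N ->
  exists c : {ffun 'I_n -> F}, forall i, i \in S -> feval c (pts i) = target (pts i).
Proof.
move=> le_n; have S_on P : P \in pts @: S -> onH P by case/imsetP => i _ ->.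
have le_n' : (#|pts @: S| + 2 * g <= n)%N.
  by apply: leq_trans le_n; rewrite leq_add2r leq_imset_card.
have [c cE] := mspan_feval (inL_interpolate q_gt1 target S_on le_n').
by exists c => i Si; rewrite -cE //; apply: imset_f.
Qed.

Definition prod_x_alpha (P : F * F) : F := \prod_(i < m) (P.1 - alpha i).

Definition prod_x_alpha_but (i0 : 'I_m) (P : F * F) : F :=
  \prod_(i < m | i != i0) (P.1 - alpha i).

Lemma prod_x_alpha_piece k P : P.1 != alpha k.1 ->
  prod_x_alpha P * piece_fn k P = P.2 ^+ k.2 * prod_x_alpha_but k.1 P.
Proof.
rewrite -subr_eq0 => P_off.
by rewrite /prod_x_alpha /prod_x_alpha_but (bigD1 k.1) //= /piece_fn; field.
Qed.

Lemma prod_x_alpha_fibre (c : piece -> F) i z (P := (alpha i, beta i z)) :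
  \sum_k c k * (P.2 ^+ k.2 * prod_x_alpha_but k.1 P) =
  prod_x_alpha_but i P * \sum_(b < q) c (i, b) * P.2 ^+ b.
Proof.
transitivity (\sum_(a < m) \sum_(b < q) c (a, b) * (P.2 ^+ b * prod_x_alpha_but a P)).
  by rewrite pair_big; apply: eq_bigr => -[a b].
rewrite (bigD1 i) //= [X in _ + X]big1 ?addr0 => [|a ne_ai]; last first.
  apply: big1 => b _.
  by rewrite /prod_x_alpha_but (bigD1 i) 1?eq_sym //= subrr mul0r !mulr0.
by rewrite mulr_sumr; apply: eq_bigr => b _; ring.
Qed.

Lemma y_pole_lt b : (b < q)%N -> (pole q 0 b < q + 2 * g)%N.
Proof.
move=> lt_bq; rewrite /pole double_herm_genus add0n.
have : (q * b <= q * (q - 1))%N by rewrite leq_mul2l; apply/orP; right; lia.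
lia.
Qed.

Lemma inL_y_exp b : (b < q)%N -> inL (pole q 0 b).+1 (fun P => P.2 ^+ b).
Proof.
move=> lt_bq; apply: mspan_ext (inL_monomial F q (ltnSn _)) => P _.
by rewrite monomial_pole // mul1r.
Qed.

Lemma file_fn_eq0 v h : inL nI h -> (forall n, file_fn v (pts n) = h (pts n)) -> v = 0.
Proof.
move=> hL vh.
pose Phi P := \sum_k coord v k * (P.2 ^+ k.2 * prod_x_alpha_but k.1 P) - prod_x_alpha P * h P.
have PhiL : inL (q * m + nI) Phi.
  apply: mspanB.
    apply: mspan_sum => k _; apply: mspanZ.
    have := inL_mul q_gt1 (inL_y_exp (ltn_ord k.2))
      (inL_prod_x_sub q_gt1 (fun i => i != k.1) alpha).
    apply: mspan_widen; have := y_pole_lt (ltn_ord k.2); rewrite card_ord; lia.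
  have := inL_mul q_gt1 (inL_prod_x_sub q_gt1 predT alpha) hL; rewrite card_ord addSn /=.
  by apply: mspan_ext.
have Phi_pts n : Phi (pts n) = 0.
  rewrite /Phi; under eq_bigr => k _ do rewrite -prod_x_alpha_piece ?pts_off // mulrCA.
  by rewrite -mulr_sumr; have := vh n; rewrite /file_fn => ->; rewrite subrr.
have Phi0 : forall P, onH P -> Phi P = 0.
  apply: (inL_eq0 q_gt1 (S := pts @: 'I_N) _ PhiL) => [_ /imsetP[n _ ->] //|_ /imsetP[n _ ->] //|].
  by rewrite card_imset // card_ord.
apply: coord_eq0 => -[i b].
apply: (roots_coef_eq0 (c := fun b => coord v (i, b)) (@beta_inj i)) => z.
have c_neq0 : prod_x_alpha_but i (alpha i, beta i z) != 0.
  by apply/prodf_neq0 => i' ne_i'i; rewrite subr_eq0 (inj_eq alpha_inj) eq_sym.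
apply: (mulfI c_neq0); rewrite mulr0 -prod_x_alpha_fibre.
have := Phi0 _ (beta_on i z); rewrite /Phi.
have -> : prod_x_alpha (alpha i, beta i z) = 0 by rewrite /prod_x_alpha (bigD1 i) //= subrr mul0r.
by rewrite mul0r subr0.
Qed.

Local Notation files := {ffun 'I_M -> 'rV[F]_L}.
Local Notation RS := {ffun 'I_M * piece -> {ffun 'I_nX -> F}}.
Local Notation RQ := {ffun 'I_M * piece -> {ffun 'I_nT -> F}}.
Local Notation W := {ffun 'I_M * piece -> F}.

Definition herm_store (s : files) (rs : RS) (n : 'I_N) : W :=
  [ffun j => coord (s j.1) j.2 + ((pts n).1 - alpha j.2.1) * feval (rs j) (pts n)].

Definition herm_query (mu : 'I_M) (r : RQ) (n : 'I_N) : W :=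
  [ffun j => (j.1 == mu)%:R * piece_fn j.2 (pts n) + feval (r j) (pts n)].

Definition herm_answer (n : 'I_N) (Qn Wn : W) : F := \sum_j Qn j * Wn j.

Definition herm_decode (mu : 'I_M) (r : RQ) (a : 'I_N -> F) : 'rV[F]_L :=
  odflt 0 [pick v | [exists c : {ffun 'I_nI -> F},
    [forall n, a n == file_fn v (pts n) + feval c (pts n)]]].

Definition interference (s : files) (rs : RS) (mu : 'I_M) (r : RQ) (P : F * F) : F :=
  \sum_(j : 'I_M * piece) ((j.1 == mu)%:R * (P.2 ^+ j.2.2 * feval (rs j) P)
    + coord (s j.1) j.2 * feval (r j) P + (P.1 - alpha j.2.1) * feval (rs j) P * feval (r j) P).

Lemma herm_answerE s rs mu r n :
  herm_answer n (herm_query mu r n) (herm_store s rs n) =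
  file_fn (s mu) (pts n) + interference s rs mu r (pts n).
Proof.
pose wanted (j : 'I_M * piece) := (j.1 == mu)%:R * (coord (s j.1) j.2 * piece_fn j.2 (pts n)).
have fileE : file_fn (s mu) (pts n) = \sum_j wanted j.
  rewrite -(pair_big predT predT (fun a k => wanted (a, k))) (bigD1 mu) //=.
  rewrite [X in _ + X]big1 ?addr0 => [|a ne_a]; last first.
    by apply: big1 => k _; rewrite /wanted (negbTE ne_a) mul0r.
  by apply: eq_bigr => k _; rewrite /wanted eqxx mul1r.
rewrite fileE /interference -big_split /=; apply: eq_bigr => j _.
have := pts_off n j.2.1; rewrite -subr_eq0 => off.
by rewrite !ffunE /wanted /piece_fn; field.
Qed.

Lemma interference_inL s rs mu r : inL nI (interference s rs mu r).
Proof.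
apply: mspan_sum => j _; apply: mspanD; [apply: mspanD|].
- apply: mspanZ; have := inL_mul q_gt1 (inL_y_exp (ltn_ord j.2.2)) (feval_inL (rs j)).
  by apply: mspan_widen; have := y_pole_lt (ltn_ord j.2.2); lia.
- by apply/mspanZ/(mspan_widen _ (feval_inL (r j))); lia.
- have xrsL := inL_mul q_gt1 (inL_x_sub q_gt1 (alpha j.2.1)) (feval_inL (rs j)).
  have := inL_mul q_gt1 xrsL (feval_inL (r j)).
  by apply: mspan_widen; lia.
Qed.

Lemma herm_decode_correct s rs mu r :
  herm_decode mu r (fun n => herm_answer n (herm_query mu r n) (herm_store s rs n)) = s mu.
Proof.
rewrite /herm_decode; case: pickP => [v /existsP[c /forallP vc] | none] /=.
  apply/eqP; rewrite -subr_eq0; apply/eqP.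
  apply: (file_fn_eq0 (mspanB (interference_inL s rs mu r) (feval_inL c))) => n.
  move/eqP: (vc n); rewrite herm_answerE file_fnB => /esym vE.
  by rewrite -(addrK (feval c (pts n)) (file_fn v (pts n))) vE; ring.
have [c cE] := mspan_feval (interference_inL s rs mu r).
case/negP: (negbT (none (s mu))); apply/existsP; exists c.
by apply/forallP => n; rewrite herm_answerE cE.
Qed.

Lemma herm_store_secure (S : {set 'I_N}) : (#|S| <= X)%N -> forall s s' : files,
  same_distr (fun rs : RS => [ffun n => restrict S (herm_store s rs) n])
             (fun rs : RS => [ffun n => restrict S (herm_store s' rs) n]).
Proof.
move=> le_SX s s'.
have le_S : (#|S| + 2 * g <= nX)%N by rewrite leq_add2r.
have [H HE] :=
  fin_all_exists (fun k : piece => interpolate_at (fun P => (P.1 - alpha k.1)^-1) le_S).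
pose D : RS := [ffun j => [ffun t => (coord (s j.1) j.2 - coord (s' j.1) j.2) * H j.2 t]].
apply: (same_distr_addr (D := D)) => rs; apply/ffunP => n; rewrite !ffunE /restrict.
case: ifP => // Sn; congr Some; apply/ffunP => j; rewrite !ffunE fevalD feval_scale HE //.
by have := pts_off n j.2.1; rewrite -subr_eq0 => off; field.
Qed.

Lemma herm_query_private (S : {set 'I_N}) : (#|S| <= T)%N -> forall mu mu' : 'I_M,
  same_distr (fun r : RQ => [ffun n => restrict S (herm_query mu r) n])
             (fun r : RQ => [ffun n => restrict S (herm_query mu' r) n]).
Proof.
move=> le_ST mu mu'.
have le_S : (#|S| + 2 * g <= nT)%N by rewrite leq_add2r.
have [H HE] := fin_all_exists (fun k : piece => interpolate_at (piece_fn k) le_S).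
pose D : RQ := [ffun j => [ffun t => ((j.1 == mu)%:R - (j.1 == mu')%:R) * H j.2 t]].
apply: (same_distr_addr (D := D)) => r; apply/ffunP => n; rewrite !ffunE /restrict.
case: ifP => // Sn; congr Some; apply/ffunP => j; rewrite !ffunE fevalD feval_scale HE //.
ring.
Qed.

Lemma card_randomness_gt0 n : (0 < #|{ffun 'I_M * piece -> {ffun 'I_n -> F}}|)%N.
Proof. by apply/card_gt0P; exists 0. Qed.

Definition herm_scheme : xstpir_scheme F N M L X T :=
  XSTPIR (card_randomness_gt0 nX) (card_randomness_gt0 nT)
    herm_decode_correct herm_store_secure herm_query_private.

End Scheme.

Lemma herm_server_bounds q L X T : (1 < q)%N -> (q %| L + herm_genus q)%N ->
  let N := (L + X + T + (3 * q ^ 2 - q - 2))%N in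
  (q * ((L + herm_genus q) %/ q) + (q + (X + 2 * herm_genus q) + (T + 2 * herm_genus q)) <= N)%N /\
  (N <= L + X + T + (7 * q ^ 2 - 3 * q - 6) %/ 2 + 1)%N.
Proof.
move=> q_gt1 dvd_q N; rewrite mulnC divnK //.
have := double_herm_genus q; have : (2 * q <= q * q)%N by rewrite leq_mul2r q_gt1 orbT.
rewrite /N expnS expn1 mulnBr muln1; lia.
Qed.

Unset Implicit Arguments.

Theorem theorem3p3
  (q : nat) (F : finFieldType) (X T L : nat)
  (alpha : nat -> F) (beta : nat -> nat -> F) :
  prime_power q ->
  #|F| = (q ^ 2)%N ->
  (0 < X)%N -> (0 < T)%N ->
  (herm_genus q <= L)%N -> (L <= q ^ 3 - herm_genus q)%N ->
  (L + herm_genus q = 0 %[mod q])%N ->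
  let m := ((L + herm_genus q) %/ q)%N in
  (* alpha_1..alpha_m pairwise distinct, nonzero *)
  {in [pred i | (0 < i <= m)%N] &, injective alpha} ->
  (forall i, (0 < i <= m)%N -> alpha i != 0) ->
  (* P_{i,z} = (alpha_i, beta_{i,z}) are mq distinct affine rational points *)
  (forall i z, (0 < i <= m)%N -> (0 < z <= q)%N ->
     on_hermitian q (alpha i, beta i z)) ->
  (forall i z i' z', (0 < i <= m)%N -> (0 < z <= q)%N ->
     (0 < i' <= m)%N -> (0 < z' <= q)%N ->
     (alpha i, beta i z) = (alpha i', beta i' z') -> i = i' /\ z = z') ->
  (* enough further rational points, distinct from P_inf, P_0, all P_{i,z} *)
  (L + X + T + (7 * q ^ 2 - 3 * q - 6) %/ 2 + 1 <=
     #|[set P : F * F | on_hermitian q P && (P != ((0%R : F), (0%R : F))) &&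
         ~~ [exists i : 'I_m.+1, exists z : 'I_q.+1,
              [&& (0 < i)%N, (0 < z)%N & P == (alpha i, beta i z)]]]|)%N ->
  let N := (L + X + T + (3 * q ^ 2 - q - 2))%N in
  forall M : nat,
    inhabited (xstpir_scheme F N M L X T) /\
    xstpir_rate N L = 1 - (X + T + (3 * q ^ 2 - q - 2))%N%:R / N%:R.
Proof.
move=> pp_q _ X_gt0 _ _ _ mod_Lg m alpha_inj _ on_fibre fibre_inj enough N M.
have q_gt1 := prime_power_gt1 pp_q.
have dvd_q : (q %| L + herm_genus q)%N by rewrite /dvdn mod_Lg mod0n.
have [N_large N_enough] := herm_server_bounds X T q_gt1 dvd_q.
split; last by rewrite /N -!addnA xstpir_rate_split ?addn_gt0 ?X_gt0 ?orbT // !addnA.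
pose alpha' (i : 'I_m) := alpha i.+1; pose beta' (i : 'I_m) (z : 'I_q) := beta i.+1 z.+1.
have inI (i : 'I_m) : i.+1 \in [pred i | (0 < i <= m)%N] by rewrite inE /= ltn_ord.
have alpha'_inj : injective alpha' by move=> i j /alpha_inj eq_ij; apply/val_inj/eq_add_S/eq_ij.
have beta'_on i z : on_hermitian q (alpha' i, beta' i z) by apply: on_fibre; rewrite /= ltn_ord.
have beta'_inj i : injective (beta' i).
  move=> z z' eq_zz'; apply/val_inj/eq_add_S.
  have := fibre_inj i.+1 z.+1 i.+1 z'.+1 (inI i) (ltn_ord z) (inI i) (ltn_ord z').
  by case/(_ (congr1 _ eq_zz')).
have [pts pts_inj pts_Ext] := pick_points (leq_trans N_enough enough).
have pts_on n : on_hermitian q (pts n) by have := pts_Ext n; rewrite inE => /andP[/andP[]].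
have pts_off n i : (pts n).1 != alpha' i.
  apply/eqP => eq_x.
  have [z eq_y] := hermitian_fibre q_gt1 (beta'_inj i) (beta'_on i) (pts_on n) eq_x.
  have := pts_Ext n; rewrite inE => /andP[_ /negP]; apply; apply/existsP; exists (inord i.+1).
  apply/existsP; exists (inord z.+1); rewrite !inordK ?ltnS ?ltn_ord //=.
  by rewrite [pts n]surjective_pairing eq_x eq_y.
have L_le : (L <= m * q)%N by rewrite divnK // leq_addr.
split; exact: (herm_scheme M q_gt1 alpha'_inj beta'_on beta'_inj L_le pts_inj pts_on pts_off
  N_large).
Qed.
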